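(* Let $\alpha\in\mathbb R$ and let $(x(s),z(s),\psi(s))$ be a solution of the system $$x'=\cos\psi,\quad z'=\sin\psi,\quad \psi'=\alpha\,\frac{z\cos\psi-x\sin\psi}{x^2+z^2}-\frac{\sin\psi}{x},$$ with initial conditions $(x(0),z(0))=(1,0)$, $\psi(0)=\pi/2$. Then the curve $\gamma(s)=(x(s),0,z(s))$ is symmetric about the $x$-axis.
   Context: The system describes the arc-length parametrized generating curve $\gamma$ of a surface of revolution about the $z$-axis satisfying $H=\alpha\langle\nu,p\rangle/|p|^2$ ($H$ the sum of the principal curvatures); the initial conditions mean $\gamma$ meets the $x$-axis orthogonally at $(1,0,0)$. *)

From Stdlib Require Import Reals.
From Coquelicot Require Import Coquelicot.
Open Scope R_scope.

Definition is_solution (alpha a b : R) (x z psi : R -> R) : Prop :=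
  forall s, a < s < b ->
    x s <> 0 /\
    is_derive x s (cos (psi s)) /\
    is_derive z s (sin (psi s)) /\
    is_derive psi s
      (alpha * (z s * cos (psi s) - x s * sin (psi s)) / (x s ^ 2 + z s ^ 2)
       - sin (psi s) / x s).

From Stdlib Require Import Reals Lra.
From Coquelicot Require Import Coquelicot.
Open Scope R_scope.

(* The reflection (x, z, psi)(s) |-> (x, -z, pi - psi)(-s) maps solutions of
   the system to solutions, and it fixes the initial data (1, 0, pi/2).  On a
   compact interval around 0 the coordinate x stays away from 0, so the
   right-hand side is Lipschitz along both solutions; Gronwall's inequality for
   the squared distance between them then shows that they coincide. *)

Lemma Rabs_sin_sub_le p q : Rabs (sin p - sin q) <= Rabs (p - q).
Proof.
  destruct (MVT_gen sin q p cos) as [c [_ Hc]].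
  - intros; apply is_derive_sin.
  - intros; apply continuity_sin.
  - rewrite Hc, Rabs_mult.
    pose proof (Rabs_pos (p - q)).
    assert (Rabs (cos c) <= 1) by (apply Rabs_le; apply COS_bound).
    nra.
Qed.

Lemma Rabs_cos_sub_le p q : Rabs (cos p - cos q) <= Rabs (p - q).
Proof.
  destruct (MVT_gen cos q p (fun t => - sin t)) as [c [_ Hc]].
  - intros; apply is_derive_cos.
  - intros; apply continuity_cos.
  - rewrite Hc, Rabs_mult, Rabs_Ropp.
    pose proof (Rabs_pos (p - q)).
    assert (Rabs (sin c) <= 1) by (apply Rabs_le; apply SIN_bound).
    nra.
Qed.

Section BoundedNear.

Variable d : R.

Definition bounded_near (B L a A : R) :=
  Rabs a <= B /\ Rabs A <= B /\ Rabs (a - A) <= L * d.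

Lemma bounded_near_const c : bounded_near (Rabs c) 0 c c.
Proof. unfold bounded_near; rewrite Rminus_diag, Rabs_R0; lra. Qed.

Lemma bounded_near_sin L p q : Rabs (p - q) <= L * d ->
  bounded_near 1 L (sin p) (sin q).
Proof.
  split; [|split]; try (apply Rabs_le; apply SIN_bound).
  eapply Rle_trans; [apply Rabs_sin_sub_le | assumption].
Qed.

Lemma bounded_near_cos L p q : Rabs (p - q) <= L * d ->
  bounded_near 1 L (cos p) (cos q).
Proof.
  split; [|split]; try (apply Rabs_le; apply COS_bound).
  eapply Rle_trans; [apply Rabs_cos_sub_le | assumption].
Qed.

Lemma bounded_near_add Ba La Bb Lb a A b B :
  bounded_near Ba La a A -> bounded_near Bb Lb b B ->
  bounded_near (Ba + Bb) (La + Lb) (a + b) (A + B).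
Proof.
  intros (? & ? & ?) (? & ? & ?).
  split; [|split]; [| |replace (a + b - (A + B)) with ((a - A) + (b - B)) by ring];
    (eapply Rle_trans; [apply Rabs_triang | lra]).
Qed.

Lemma bounded_near_opp B L a A :
  bounded_near B L a A -> bounded_near B L (- a) (- A).
Proof.
  intros (? & ? & ?).
  unfold bounded_near; rewrite !Rabs_Ropp.
  replace (- a - - A) with (- (a - A)) by ring; rewrite Rabs_Ropp; auto.
Qed.

Lemma bounded_near_sub Ba La Bb Lb a A b B :
  bounded_near Ba La a A -> bounded_near Bb Lb b B ->
  bounded_near (Ba + Bb) (La + Lb) (a - b) (A - B).
Proof. intros Ha Hb; apply bounded_near_add; [|apply bounded_near_opp]; auto. Qed.

Lemma bounded_near_mul Ba La Bb Lb a A b B :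
  bounded_near Ba La a A -> bounded_near Bb Lb b B ->
  bounded_near (Ba * Bb) (La * Bb + Ba * Lb) (a * b) (A * B).
Proof.
  intros (Ha & HA & Hd) (Hb & HB & He).
  pose proof (Rabs_pos a); pose proof (Rabs_pos A); pose proof (Rabs_pos b);
  pose proof (Rabs_pos B); pose proof (Rabs_pos (a - A)); pose proof (Rabs_pos (b - B)).
  unfold bounded_near; rewrite !Rabs_mult.
  split; [|split]; try (apply Rmult_le_compat; lra).
  replace (a * b - A * B) with ((a - A) * b + A * (b - B)) by ring.
  eapply Rle_trans; [apply Rabs_triang|]; rewrite !Rabs_mult.
  assert (Rabs (a - A) * Rabs b <= La * d * Bb) by (apply Rmult_le_compat; lra).
  assert (Rabs A * Rabs (b - B) <= Ba * (Lb * d)) by (apply Rmult_le_compat; lra).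
  lra.
Qed.

Lemma bounded_near_inv B L m a A : 0 < m -> m <= Rabs a -> m <= Rabs A ->
  bounded_near B L a A -> bounded_near (/ m) (L / (m * m)) (/ a) (/ A).
Proof.
  intros Hm Ha HA (_ & _ & Hd).
  assert (a <> 0) by (intros ->; rewrite Rabs_R0 in Ha; lra).
  assert (A <> 0) by (intros ->; rewrite Rabs_R0 in HA; lra).
  unfold bounded_near; rewrite !Rabs_inv.
  split; [|split]; try (apply Rinv_le_contravar; lra).
  replace (/ a - / A) with ((A - a) / (a * A)) by (field; auto).
  replace (L / (m * m) * d) with (L * d * / (m * m)) by (field; lra).
  unfold Rdiv; rewrite Rabs_mult, Rabs_inv, Rabs_mult, Rabs_minus_sym.
  apply Rmult_le_compat; try lra.
  - apply Rabs_pos.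
  - left; apply Rinv_0_lt_compat; nra.
  - apply Rinv_le_contravar; nra.
Qed.

End BoundedNear.

Definition curve_field (alpha x z p : R) : R :=
  alpha * (z * cos p - x * sin p) / (x ^ 2 + z ^ 2) - sin p / x.

Lemma sqr_le_Rabs_sum_sqr m x z : 0 <= m -> m <= Rabs x ->
  m * m <= Rabs (x * x + z * z).
Proof.
  intros Hm Hx.
  rewrite Rabs_pos_eq by nra.
  assert (Hxx : m * m <= Rabs x * Rabs x) by (apply Rmult_le_compat; lra).
  rewrite <- Rabs_mult, Rabs_pos_eq in Hxx by nra.
  nra.
Qed.

Lemma curve_field_lipschitz alpha m M : 0 < m ->
  exists L, forall x z p X Z q,
    m <= Rabs x -> m <= Rabs X -> Rabs x <= M -> Rabs X <= M ->
    Rabs z <= M -> Rabs Z <= M ->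
    Rabs (curve_field alpha x z p - curve_field alpha X Z q)
      <= L * (Rabs (x - X) + Rabs (z - Z) + Rabs (p - q)).
Proof.
  intros Hm.
  (* L is assembled by unification while the [bounded_near] rules are applied. *)
  eexists; intros x z p X Z q Hx HX HxM HXM HzM HZM.
  set (d := Rabs (x - X) + Rabs (z - Z) + Rabs (p - q)).
  pose proof (Rabs_pos (x - X)); pose proof (Rabs_pos (z - Z)); pose proof (Rabs_pos (p - q)).
  assert (nx : bounded_near d M 1 x X) by (repeat split; unfold d; lra).
  assert (nz : bounded_near d M 1 z Z) by (repeat split; unfold d; lra).
  assert (np : Rabs (p - q) <= 1 * d) by (unfold d; lra).
  eapply (fun H : bounded_near d _ _ _ _ => proj2 (proj2 H)).
  unfold curve_field, Rdiv.
  replace (x ^ 2 + z ^ 2) with (x * x + z * z) by ring.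
  replace (X ^ 2 + Z ^ 2) with (X * X + Z * Z) by ring.
  apply bounded_near_sub; apply bounded_near_mul.
  - apply bounded_near_mul; [apply bounded_near_const|].
    apply bounded_near_sub; apply bounded_near_mul;
      eauto using bounded_near_sin, bounded_near_cos.
  - eapply (bounded_near_inv _ _ _ (m * m)).
    + nra.
    + apply sqr_le_Rabs_sum_sqr; lra.
    + apply sqr_le_Rabs_sum_sqr; lra.
    + apply bounded_near_add; apply bounded_near_mul; eauto.
  - apply bounded_near_sin; eauto.
  - eapply (bounded_near_inv _ _ _ m); eauto.
Qed.

Lemma is_derive_continuity_pt (f : R -> R) t l : is_derive f t l -> continuity_pt f t.
Proof.
  intros H; apply continuity_pt_filterlim, (ex_derive_continuous f t).
  exists l; exact H.
Qed.

Lemma gronwall_nonpos (f df : R -> R) K s : 0 <= s ->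
  (forall t, 0 <= t <= s -> is_derive f t (df t)) ->
  (forall t, 0 <= t <= s -> df t <= K * f t) ->
  f 0 <= 0 -> f s <= 0.
Proof.
  intros Hs Hf Hdf Hf0.
  set (G := fun t => exp (- K * t) * f t).
  assert (HG : forall t, 0 <= t <= s ->
            is_derive G t (exp (- K * t) * (df t - K * f t))).
  { intros t Ht.
    replace (exp (- K * t) * (df t - K * f t))
      with (- K * exp (- K * t) * f t + exp (- K * t) * df t) by ring.
    apply (is_derive_mult (fun u => exp (- K * u)) f); auto.
    - auto_derive; auto; ring.
    - intros; apply Rmult_comm. }
  destruct (MVT_gen G 0 s (fun t => exp (- K * t) * (df t - K * f t)))
    as [c [Hc HGs]]; rewrite Rmin_left, Rmax_right in * by lra.
  - intros t Ht; apply HG; lra.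
  - intros t Ht; eapply is_derive_continuity_pt, HG; lra.
  - assert (exp (- K * c) * (df c - K * f c) <= 0).
    { pose proof (exp_pos (- K * c)); pose proof (Hdf c Hc); nra. }
    assert (G s <= 0) by (unfold G in *; rewrite Rmult_0_r, exp_0 in HGs; nra).
    unfold G in *; pose proof (exp_pos (- K * s)); nra.
Qed.

Lemma sum_mul_le_sum_sqr a1 a2 a3 b1 b2 b3 L : 0 <= L ->
  Rabs b1 <= L * (Rabs a1 + Rabs a2 + Rabs a3) ->
  Rabs b2 <= L * (Rabs a1 + Rabs a2 + Rabs a3) ->
  Rabs b3 <= L * (Rabs a1 + Rabs a2 + Rabs a3) ->
  a1 * b1 + a2 * b2 + a3 * b3 <= 3 * L * (a1 ^ 2 + a2 ^ 2 + a3 ^ 2).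
Proof.
  intros HL H1 H2 H3.
  set (d := Rabs a1 + Rabs a2 + Rabs a3) in *.
  assert (Hab : forall a b, Rabs b <= L * d -> a * b <= Rabs a * (L * d)).
  { intros a b Hb; eapply Rle_trans; [apply Rle_abs|].
    rewrite Rabs_mult; apply Rmult_le_compat_l; [apply Rabs_pos | exact Hb]. }
  assert (Hd : d * d <= 3 * (a1 ^ 2 + a2 ^ 2 + a3 ^ 2)).
  { rewrite <- (pow2_abs a1), <- (pow2_abs a2), <- (pow2_abs a3); unfold d.
    pose proof (pow2_ge_0 (Rabs a1 - Rabs a2)); pose proof (pow2_ge_0 (Rabs a2 - Rabs a3));
    pose proof (pow2_ge_0 (Rabs a1 - Rabs a3)); nra. }
  pose proof (Hab a1 b1 H1); pose proof (Hab a2 b2 H2); pose proof (Hab a3 b3 H3).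
  assert (L * (d * d) <= L * (3 * (a1 ^ 2 + a2 ^ 2 + a3 ^ 2)))
    by (apply Rmult_le_compat_l; auto).
  assert (Rabs a1 * (L * d) + Rabs a2 * (L * d) + Rabs a3 * (L * d) = L * (d * d))
    by (unfold d; ring).
  lra.
Qed.

Lemma vanishing_of_linear_derivative_bound (w1 w2 w3 e1 e2 e3 : R -> R) L s :
  0 <= s -> 0 <= L ->
  (forall t, 0 <= t <= s ->
     is_derive w1 t (e1 t) /\ is_derive w2 t (e2 t) /\ is_derive w3 t (e3 t)) ->
  (forall t, 0 <= t <= s ->
     let d := Rabs (w1 t) + Rabs (w2 t) + Rabs (w3 t) in
     Rabs (e1 t) <= L * d /\ Rabs (e2 t) <= L * d /\ Rabs (e3 t) <= L * d) ->
  w1 0 = 0 -> w2 0 = 0 -> w3 0 = 0 ->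
  w1 s = 0 /\ w2 s = 0 /\ w3 s = 0.
Proof.
  intros Hs HL Hw He H1 H2 H3.
  set (E := fun t => w1 t ^ 2 + w2 t ^ 2 + w3 t ^ 2).
  assert (HEs : E s <= 0).
  { apply (gronwall_nonpos E (fun t => 2 * (w1 t * e1 t + w2 t * e2 t + w3 t * e3 t))
             (6 * L)); auto.
    - intros t Ht; destruct (Hw t Ht) as (D1 & D2 & D3).
      replace (2 * (w1 t * e1 t + w2 t * e2 t + w3 t * e3 t))
        with (INR 2 * e1 t * w1 t ^ 1 + INR 2 * e2 t * w2 t ^ 1 + INR 2 * e3 t * w3 t ^ 1)
        by (simpl; ring).
      apply (@is_derive_plus R_AbsRing R_NormedModule);
        [apply (@is_derive_plus R_AbsRing R_NormedModule)|]; apply is_derive_pow; auto.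
    - intros t Ht; destruct (He t Ht) as (B1 & B2 & B3).
      pose proof (sum_mul_le_sum_sqr _ _ _ _ _ _ L HL B1 B2 B3); unfold E; lra.
    - unfold E; rewrite H1, H2, H3; lra. }
  unfold E in HEs.
  pose proof (pow2_ge_0 (w1 s)); pose proof (pow2_ge_0 (w2 s)); pose proof (pow2_ge_0 (w3 s)).
  repeat split; apply Rsqr_0_uniq; rewrite Rsqr_pow2; lra.
Qed.

Lemma is_solution_restrict alpha a b a' b' x z psi : a <= a' -> b' <= b ->
  is_solution alpha a b x z psi -> is_solution alpha a' b' x z psi.
Proof. intros Ha Hb Hsol s Hs; apply Hsol; lra. Qed.

Lemma is_derive_reflect (f : R -> R) t l :
  is_derive f (- t) l -> is_derive (fun u => f (- u)) t (- l).
Proof.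
  intros Hf; replace (- l) with (scal (-1) l) by (unfold scal; simpl; unfold mult; simpl; ring).
  apply (is_derive_comp f Ropp); auto.
  auto_derive; auto; ring.
Qed.

Lemma curve_field_reflect alpha x z p :
  curve_field alpha x (- z) (PI - p) = curve_field alpha x z p.
Proof.
  unfold curve_field; rewrite sin_PI_x, Rtrigo_facts.cos_pi_minus.
  replace ((- z) ^ 2) with (z ^ 2) by ring.
  unfold Rdiv; ring.
Qed.

Lemma is_solution_reflect alpha a b x z psi : is_solution alpha a b x z psi ->
  is_solution alpha (- b) (- a)
    (fun t => x (- t)) (fun t => - z (- t)) (fun t => PI - psi (- t)).
Proof.
  intros Hsol t Ht.
  destruct (Hsol (- t)) as (Hx & Dx & Dz & Dpsi); [lra|].
  split; [auto | split; [|split]].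
  - rewrite Rtrigo_facts.cos_pi_minus; apply is_derive_reflect; auto.
  - rewrite sin_PI_x, <- (Ropp_involutive (sin (psi (- t)))).
    apply (@is_derive_opp R_AbsRing R_NormedModule).
    apply is_derive_reflect; auto.
  - change (is_derive (fun u => PI - psi (- u)) t
      (curve_field alpha (x (- t)) (- z (- t)) (PI - psi (- t)))).
    rewrite curve_field_reflect.
    replace (curve_field alpha (x (- t)) (z (- t)) (psi (- t)))
      with (0 - - curve_field alpha (x (- t)) (z (- t)) (psi (- t))) by ring.
    apply (@is_derive_minus R_AbsRing R_NormedModule);
      [apply (@is_derive_const R_AbsRing R_NormedModule) | apply is_derive_reflect; exact Dpsi].
Qed.

Lemma is_solution_bounds alpha a b x z psi c e :
  is_solution alpha a b x z psi -> a < c -> c <= e -> e < b ->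
  exists m M, 0 < m /\ forall t, c <= t <= e ->
    m <= Rabs (x t) /\ Rabs (x t) <= M /\ Rabs (z t) <= M.
Proof.
  intros Hsol Hc Hce He.
  assert (Hcont : forall t, c <= t <= e -> continuity_pt x t /\ continuity_pt z t).
  { intros t Ht; destruct (Hsol t) as (_ & Dx & Dz & _); [lra|].
    split; eapply is_derive_continuity_pt; eauto. }
  assert (Habs : forall f, (forall t, c <= t <= e -> continuity_pt f t) ->
            forall t, c <= t <= e -> continuity_pt (fun u => Rabs (f u)) t).
  { intros f Hf t Ht; apply (continuity_pt_comp f Rabs); auto.
    apply Rcontinuity_abs. }
  destruct (continuity_ab_min (fun t => Rabs (x t)) c e) as [tm [Hm Htm]]; auto.
  { apply Habs; apply Hcont. }
  destruct (continuity_ab_maj (fun t => Rabs (x t) + Rabs (z t)) c e) as [tM [HM _]]; auto.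
  { intros t Ht; apply continuity_pt_plus; apply Habs; auto; apply Hcont. }
  exists (Rabs (x tm)), (Rabs (x tM) + Rabs (z tM)); split.
  - apply Rabs_pos_lt; apply (Hsol tm); lra.
  - intros t Ht; specialize (Hm t Ht); specialize (HM t Ht); simpl in *.
    pose proof (Rabs_pos (x t)); pose proof (Rabs_pos (z t)); lra.
Qed.

Lemma is_solution_unique alpha a b x z psi X Z Q s :
  is_solution alpha a b x z psi -> is_solution alpha a b X Z Q ->
  a < 0 -> 0 <= s < b ->
  x 0 = X 0 -> z 0 = Z 0 -> psi 0 = Q 0 ->
  x s = X s /\ z s = Z s /\ psi s = Q s.
Proof.
  intros Hsol HSol Ha Hs Hx0 Hz0 Hpsi0.
  destruct (is_solution_bounds alpha a b x z psi 0 s) as (m1 & M1 & Hm1 & B1); try lra; auto.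
  destruct (is_solution_bounds alpha a b X Z Q 0 s) as (m2 & M2 & Hm2 & B2); try lra; auto.
  destruct (curve_field_lipschitz alpha (Rmin m1 m2) (Rmax M1 M2)) as [L HL].
  { apply Rmin_glb_lt; auto. }
  destruct (vanishing_of_linear_derivative_bound
    (fun t => x t - X t) (fun t => z t - Z t) (fun t => psi t - Q t)
    (fun t => cos (psi t) - cos (Q t)) (fun t => sin (psi t) - sin (Q t))
    (fun t => curve_field alpha (x t) (z t) (psi t) - curve_field alpha (X t) (Z t) (Q t))
    (Rabs L + 1) s) as (Ex & Ez & Epsi);
    [lra | pose proof (Rabs_pos L); lra | | | lra | lra | lra | lra].
  - intros t Ht; destruct (Hsol t) as (_ & Dx & Dz & Dpsi); [lra|];
      destruct (HSol t) as (_ & DX & DZ & DQ); [lra|].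
    split; [|split]; apply (@is_derive_minus R_AbsRing R_NormedModule); auto.
  - intros t Ht d.
    destruct (B1 t Ht) as (? & ? & ?); destruct (B2 t Ht) as (? & ? & ?).
    assert (Hd : Rabs (psi t - Q t) <= (Rabs L + 1) * d).
    { unfold d; pose proof (Rabs_pos (x t - X t)); pose proof (Rabs_pos (z t - Z t));
        pose proof (Rabs_pos (psi t - Q t)); pose proof (Rabs_pos L); nra. }
    split; [|split].
    + eapply Rle_trans; [apply Rabs_cos_sub_le | exact Hd].
    + eapply Rle_trans; [apply Rabs_sin_sub_le | exact Hd].
    + pose proof (Rmin_l m1 m2); pose proof (Rmin_r m1 m2);
        pose proof (Rmax_l M1 M2); pose proof (Rmax_r M1 M2).
      eapply Rle_trans; [apply HL; lra|].
      apply Rmult_le_compat_r; [|pose proof (Rle_abs L); lra].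
      unfold d; pose proof (Rabs_pos (x t - X t)); pose proof (Rabs_pos (z t - Z t));
        pose proof (Rabs_pos (psi t - Q t)); lra.
Qed.

Lemma is_solution_symmetric_nonneg alpha a b x z psi s :
  a < 0 < b -> is_solution alpha a b x z psi ->
  x 0 = 1 -> z 0 = 0 -> psi 0 = PI / 2 ->
  0 <= s -> s < b -> a < - s ->
  x (- s) = x s /\ z (- s) = - z s.
Proof.
  intros Hab Hsol Hx0 Hz0 Hpsi0 Hs Hsb Has.
  destruct (is_solution_unique alpha (Rmax a (- b)) (Rmin b (- a)) x z psi
              (fun t => x (- t)) (fun t => - z (- t)) (fun t => PI - psi (- t)) s)
    as (Ex & Ez & _).
  - apply (is_solution_restrict alpha a b); auto using Rmax_l, Rmin_l.
  - apply (is_solution_restrict alpha (- b) (- a));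
      auto using Rmax_r, Rmin_r, is_solution_reflect.
  - apply Rmax_lub_lt; lra.
  - split; [lra | apply Rmin_glb_lt; lra].
  - rewrite Ropp_0; reflexivity.
  - rewrite Ropp_0, Hz0; ring.
  - rewrite Ropp_0, Hpsi0; field.
  - split; lra.
Qed.

Theorem mainTheorem14 (alpha a b : R) (x z psi : R -> R) :
  a < 0 < b ->
  is_solution alpha a b x z psi ->
  x 0 = 1 -> z 0 = 0 -> psi 0 = PI / 2 ->
  forall s, a < s < b -> a < - s < b ->
    x (- s) = x s /\ z (- s) = - z s.
Proof.
  intros Hab Hsol Hx0 Hz0 Hpsi0 s Hs Hms.
  destruct (Rle_or_lt 0 s) as [Hpos | Hneg].
  - apply (is_solution_symmetric_nonneg alpha a b x z psi); auto; lra.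
  - destruct (is_solution_symmetric_nonneg alpha a b x z psi (- s)) as [Ex Ez]; auto; try lra.
    rewrite Ropp_involutive in Ex, Ez; split; lra.
Qed.
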